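(* There exists a finite simple graph $G$ such that $4=\pi'(G)<\chi'(G)=5$.
   Context: An orthogonal $d$-edge-coloring of $G$ is a function $f:E(G)\to\mathbb{R}^d\setminus\{0\}$ such that $f(e)\perp f(e')$ whenever the distinct edges $e,e'$ share an endpoint. The orthogonal index $\pi'(G)$ is the minimum $d$ for which $G$ has an orthogonal $d$-edge-coloring. $\chi'(G)$ is the chromatic index. *)

From mathcomp Require Import all_boot.
From Stdlib Require Import Reals.

Set Implicit Arguments. Unset Strict Implicit. Unset Printing Implicit Defensive.

Definition simple_graph (T : finType) (e : rel T) : Prop :=
  symmetric e /\ irreflexive e.

Definition vecR (d : nat) := 'I_d -> R.

Definition dotR (d : nat) (u v : vecR d) : R :=
  \big[Rplus/R0]_(i < d) Rmult (u i) (v i).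

Definition nonzero_vec (d : nat) (u : vecR d) : Prop := exists i, u i <> R0.

(* An edge labelling is a function on ordered pairs that is symmetric on edges,
   i.e. a function on the unordered edges {x,y}. Two distinct edges sharing an
   endpoint are xy and xz with y <> z. *)

Definition orth_edge_coloring (T : finType) (e : rel T) (d : nat)
    (f : T -> T -> vecR d) : Prop :=
  (forall x y, e x y -> f x y = f y x) /\
  (forall x y, e x y -> nonzero_vec (f x y)) /\
  (forall x y z, e x y -> e x z -> y != z -> dotR (f x y) (f x z) = R0).

Definition has_orth_coloring (T : finType) (e : rel T) (d : nat) : Prop :=
  exists f : T -> T -> vecR d, orth_edge_coloring e f.

Definition orth_index_is (T : finType) (e : rel T) (d : nat) : Prop :=
  has_orth_coloring e d /\ (forall d', (d' < d)%N -> ~ has_orth_coloring e d').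

Definition proper_edge_coloring (T : finType) (e : rel T) (k : nat)
    (c : T -> T -> 'I_k) : Prop :=
  (forall x y, e x y -> c x y = c y x) /\
  (forall x y z, e x y -> e x z -> y != z -> c x y <> c x z).

Definition has_edge_coloring (T : finType) (e : rel T) (k : nat) : Prop :=
  exists c : T -> T -> 'I_k, proper_edge_coloring e c.

Definition chrom_index_is (T : finType) (e : rel T) (k : nat) : Prop :=
  has_edge_coloring e k /\ (forall k', (k' < k)%N -> ~ has_edge_coloring e k').

From mathcomp Require Import all_boot.
From Stdlib Require Import Reals.
From mathcomp Require Import all_order all_algebra.
From mathcomp Require Import Rstruct.
Import Order.TTheory GRing.Theory Num.Theory.

Set Implicit Arguments.
Unset Strict Implicit.
Unset Printing Implicit Defensive.

(* Witness: a 4-regular simple graph G on 9 vertices with pi'(G) = 4 and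
   chi'(G) = 5.

   Lower bounds come from two general facts:
   - pairwise orthogonal nonzero vectors of R^d number at most d (their Gram
     matrix is an invertible diagonal matrix of rank <= d); hence a vertex
     with n neighbours forces pi'(G) >= n;
   - a (k+1)-regular graph with an odd number of vertices has no proper
     (k+1)-edge-colouring: every colour is seen at every vertex, so one
     colour class is a perfect matching, i.e. a fixed-point-free involution,
     which cannot exist on an odd set.  Fewer colours widen to k+1 colours.
   Upper bounds are explicit: an orthogonal 4-colouring by integer vectors
   and a proper 5-colouring, both verified by computation. *)

Section OrthogonalFamilies.
Local Open Scope ring_scope.

Lemma dotE (d : nat) (u v : vecR d) : dotR u v = \sum_(i < d) u i * v i.
Proof. by []. Qed.

Lemma dot_self_neq0 (d : nat) (u : vecR d) : nonzero_vec u -> dotR u u != 0.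
Proof.
case=> k /eqP uk_neq0; rewrite dotE; apply/lt0r_neq0.
rewrite (bigD1 k) //= ltr_pwDl ?lt_def ?mulf_neq0 -?expr2 ?sqr_ge0 //.
by apply: sumr_ge0 => i _; rewrite -expr2 sqr_ge0.
Qed.

Lemma orthogonal_family_size (n d : nat) (u : 'I_n -> vecR d) :
  (forall i, nonzero_vec (u i)) ->
  (forall i j, i != j -> dotR (u i) (u j) = 0) -> leq n d.
Proof.
move=> u_nz u_orth.
pose M : 'M[R]_(n, d) := \matrix_(i, j) u i j.
have gram : M *m M^T = diag_mx (\row_i dotR (u i) (u i)).
  apply/matrixP => i j; rewrite !mxE.
  have -> : \sum_k M i k * M^T k j = dotR (u i) (u j).
    by rewrite dotE; apply: eq_bigr => k _; rewrite !mxE.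
  by case: eqVneq => [<-|/u_orth ->]; rewrite ?mulr1n ?mulr0n.
have gram_unit : M *m M^T \in unitmx.
  rewrite gram unitmxE det_diag unitfE.
  by apply/prodf_neq0 => i _; rewrite mxE dot_self_neq0.
rewrite -[n](mxrank_unit gram_unit).
exact: leq_trans (mxrankM_maxl M M^T) (rank_leq_col M).
Qed.

End OrthogonalFamilies.

(* The edges at a vertex x receive pairwise orthogonal nonzero vectors, so
   pi'(G) is at least the degree of x. *)
Lemma orth_coloring_degree_le (T : finType) (e : rel T) (d : nat) (x : T) :
  has_orth_coloring e d -> #|[set y | e x y]| <= d.
Proof.
move=> [f [_ [f_nz f_orth]]].
pose s := enum [set y | e x y]; have s_uniq : uniq s := enum_uniq _.
have x_s i : i < size s -> e x (nth x s i).
  by move=> i_lt; have := mem_nth x i_lt; rewrite mem_enum inE.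
rewrite cardE -/s.
apply: (@orthogonal_family_size _ _ (fun i : 'I_(size s) => f x (nth x s i))).
  by move=> i; apply/f_nz/x_s.
move=> i j ij; apply: f_orth; rewrite ?x_s //.
by rewrite nth_uniq // (inj_eq val_inj).
Qed.

Lemma widen_edge_coloring (T : finType) (e : rel T) (k m : nat) :
  k <= m -> has_edge_coloring e k -> has_edge_coloring e m.
Proof.
move=> km [c [c_sym c_proper]].
exists (fun x y => widen_ord km (c x y)); split=> [x y xy|x y z xy xz yz].
  by rewrite c_sym.
by move/(congr1 val) => /= /val_inj; apply: c_proper.
Qed.

(* A fixed-point-free involution pairs up the elements of T. *)
Lemma fixpoint_free_involution_even (T : finType) (p : T -> T) :
  involutive p -> (forall x, p x != x) -> ~~ odd #|T|.
Proof.
move=> pK p_nfix.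
pose A := [set x | enum_rank x < enum_rank (p x)].
have A_compl : ~: A = p @: A.
  apply/setP => x; rewrite !inE; apply/idP/imsetP => [x_notA|[y]].
    exists (p x); last by rewrite pK.
    rewrite inE pK ltn_neqAle leqNgt x_notA andbT.
    by rewrite (inj_eq val_inj) (inj_eq enum_rank_inj) p_nfix.
  by rewrite inE => y_lt ->; rewrite pK -leqNgt ltnW.
have := cardsC A; rewrite A_compl card_imset ?addnn; last exact: inv_inj.
by move=> <-; rewrite odd_double.
Qed.

Section RegularOddGraphs.
Variables (T : finType) (e : rel T) (k : nat).
Hypotheses (e_sym : symmetric e) (e_irr : irreflexive e).
Hypothesis e_regular : forall x, #|[set y | e x y]| = k.+1.

(* In a proper (k+1)-colouring of a (k+1)-regular graph, the colours at a
   vertex are distinct, hence every colour occurs at every vertex. *)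
Lemma color_seen_everywhere (c : T -> T -> 'I_k.+1) :
  proper_edge_coloring e c -> forall x col, exists2 y, e x y & c x y = col.
Proof.
move=> [_ c_proper] x col.
have c_inj : {in [set y | e x y] &, injective (c x)}.
  move=> y z; rewrite !inE => xy xz cyz; apply/eqP.
  by apply: contraT => /(c_proper x y z xy xz).
have : col \in c x @: [set y | e x y].
  suff -> : c x @: [set y | e x y] = [set: 'I_k.+1] by rewrite inE.
  apply/eqP; rewrite eqEcard subsetT cardsT card_ord.
  by rewrite (card_in_imset c_inj) e_regular ltnSn.
by case/imsetP => y; rewrite inE => xy ->; exists y.
Qed.

(* Hence colour 0 is a perfect matching, impossible on an odd vertex set. *)
Lemma regular_odd_no_coloring :
  odd #|T| -> ~ has_edge_coloring e k.+1.
Proof.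
move=> T_odd [c c_ok]; have [c_sym c_proper] := c_ok.
have c_unique x y z : e x y -> e x z -> c x y = c x z -> y = z.
  by move=> xy xz cyz; apply/eqP; apply: contraT => /(c_proper x y z xy xz).
pose mate x := odflt x [pick y | e x y && (c x y == ord0)].
have mateP x : e x (mate x) /\ c x (mate x) = ord0.
  rewrite /mate; case: pickP => [y /andP[-> /eqP ->] //|none].
  have [y xy cy] := color_seen_everywhere c_ok x ord0.
  by have := none y; rewrite /= xy cy eqxx.
have mateK : involutive mate.
  move=> x; have [x_m cx] := mateP x; have [m_mm cm] := mateP (mate x).
  apply: (c_unique (mate x) _ _ m_mm); first by rewrite e_sym.
  by rewrite cm -(c_sym _ _ x_m) cx.
have mate_nfix x : mate x != x.
  by have [x_m _] := mateP x; apply: contraTneq x_m => ->; rewrite e_irr.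
by have := fixpoint_free_involution_even mateK mate_nfix; rewrite T_odd.
Qed.

End RegularOddGraphs.

From Stdlib Require Import ZArith.

(* The witness graph on the vertices 0..8.  Each edge {a, b} (a < b) is
   listed with its vector in R^4 and its colour in 0..4. *)
Definition edge_table : seq ((nat * nat) * seq Z * nat) := [::
  ((0,2), [::  0;  0;  0;  1]%Z, 0);
  ((0,4), [::  0;  1; -1;  0]%Z, 1);
  ((0,5), [::  0;  1;  1;  0]%Z, 2);
  ((0,7), [::  1;  0;  0;  0]%Z, 3);
  ((1,2), [::  1; -1;  0;  0]%Z, 1);
  ((1,3), [::  0;  0;  1; -1]%Z, 0);
  ((1,5), [::  1;  1; -1; -1]%Z, 3);
  ((1,6), [::  1;  1;  1;  1]%Z, 2);
  ((2,3), [::  1;  1;  0;  0]%Z, 2);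
  ((2,7), [::  0;  0;  1;  0]%Z, 4);
  ((3,4), [::  1; -1; -1; -1]%Z, 3);
  ((3,8), [::  1; -1;  1;  1]%Z, 1);
  ((4,5), [::  1;  0;  0;  1]%Z, 0);
  ((4,8), [::  1;  1;  1; -1]%Z, 2);
  ((5,6), [::  1; -1;  1; -1]%Z, 4);
  ((6,7), [::  0;  1;  0; -1]%Z, 1);
  ((6,8), [::  1;  0; -1;  0]%Z, 3);
  ((7,8), [::  0;  1;  0;  1]%Z, 0)].

Definition edges : seq (nat * nat) := [seq t.1.1 | t <- edge_table].

Definition edge_key (a b : nat) : nat * nat := (minn a b, maxn a b).
Definition adjn (a b : nat) : bool := edge_key a b \in edges.
Definition edge_entry (a b : nat) : (nat * nat) * seq Z * nat :=
  nth ((0, 0), [::], 0) edge_table (index (edge_key a b) edges).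
Definition vecn (a b : nat) : seq Z := (edge_entry a b).1.2.
Definition colorn (a b : nat) : nat := (edge_entry a b).2.

Lemma edge_key_sym (a b : nat) : edge_key a b = edge_key b a.
Proof. by rewrite /edge_key minnC maxnC. Qed.

(* Quantification over 0..8 as a list, so that the checks below reduce by
   evaluation; forall9P transfers them to the vertex type 'I_9. *)
Definition forall9 (P : pred nat) : bool := all P (iota 0 9).

Lemma forall9P (P : pred nat) : forall9 P -> forall x : 'I_9, P x.
Proof. by move/allP=> P_all x; apply: P_all; rewrite mem_iota ltn_ord. Qed.

Definition dotZ (a b : seq Z) : Z :=
  (nth 0 a 0 * nth 0 b 0 + nth 0 a 1 * nth 0 b 1
   + nth 0 a 2 * nth 0 b 2 + nth 0 a 3 * nth 0 b 3)%Z.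

Lemma irreflexive_check : forall9 (fun a => ~~ adjn a a).
Proof. by vm_compute. Qed.

Lemma degree_check : forall9 (fun a => count (adjn a) (iota 0 9) == 4).
Proof. by vm_compute. Qed.

Lemma nonzero_check : forall9 (fun a => forall9 (fun b => adjn a b ==>
  has (fun i => ~~ Z.eqb (nth 0%Z (vecn a b) i) 0) (iota 0 4))).
Proof. by vm_compute. Qed.

Lemma orthogonal_check : forall9 (fun a => forall9 (fun b => forall9 (fun c =>
  adjn a b ==> adjn a c ==> (b != c) ==> Z.eqb (dotZ (vecn a b) (vecn a c)) 0))).
Proof. by vm_compute. Qed.

Lemma color_check : forall9 (fun a => forall9 (fun b => forall9 (fun c =>
  adjn a b ==> adjn a c ==> (b != c) ==>
  [&& colorn a b < 5, colorn a c < 5 & colorn a b != colorn a c]))).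
Proof. by vm_compute. Qed.

Definition adj (x y : 'I_9) : bool := adjn x y.
Definition edge_vec (x y : 'I_9) : vecR 4 := fun i => IZR (nth 0%Z (vecn x y) i).
Definition edge_color (x y : 'I_9) : 'I_5 := inord (colorn x y).

Lemma adj_sym : symmetric adj.
Proof. by move=> x y; rewrite /adj /adjn edge_key_sym. Qed.

Lemma adj_irr : irreflexive adj.
Proof. by move=> x; apply/negbTE/(forall9P irreflexive_check). Qed.

Lemma adj_regular (x : 'I_9) : #|[set y | adj x y]| = 4.
Proof.
transitivity (count (adjn x) (iota 0 9)); last exact/eqP/(forall9P degree_check).
by rewrite cardsE cardE /enum_mem -enumT size_filter -val_enum_ord count_map.
Qed.

Lemma dotR_edge_vec (x y z : 'I_9) :
  dotR (edge_vec x y) (edge_vec x z) = IZR (dotZ (vecn x y) (vecn x z)).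
Proof.
rewrite dotE !big_ord_recr big_ord0 /= /dotZ !plus_IZR !mult_IZR.
by rewrite !RplusE !RmultE add0r.
Qed.

Lemma edge_vec_orthogonal : orth_edge_coloring adj edge_vec.
Proof.
split; [|split].
- by move=> x y _; rewrite /edge_vec /vecn /edge_entry edge_key_sym.
- rewrite /adj => x y xy; have := forall9P (forall9P nonzero_check x) y.
  move=> /implyP/(_ xy)/hasP[i]; rewrite mem_iota add0n => i_lt /negP coord_i.
  by exists (Ordinal i_lt) => /eq_IZR_R0 coord_i0; apply: coord_i; rewrite coord_i0.
- rewrite /adj => x y z xy xz yz.
  have := forall9P (forall9P (forall9P orthogonal_check x) y) z.
  move=> /implyP/(_ xy)/implyP/(_ xz)/implyP/(_ yz)/Z.eqb_spec.
  by rewrite dotR_edge_vec => ->.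
Qed.

Lemma edge_color_proper : proper_edge_coloring adj edge_color.
Proof.
rewrite /adj; split=> [x y _|x y z xy xz yz].
  by rewrite /edge_color /colorn /edge_entry edge_key_sym.
have := forall9P (forall9P (forall9P color_check x) y) z.
move=> /implyP/(_ xy)/implyP/(_ xz)/implyP/(_ yz)/and3P[y_lt z_lt colors_ne].
by move/(congr1 val); rewrite /= !inordK //; apply/eqP.
Qed.

Theorem mainTheorem6 :
  exists (T : finType) (e : rel T),
    simple_graph e /\ orth_index_is e 4 /\ chrom_index_is e 5.
Proof.
exists 'I_9, adj; split; first exact: (conj adj_sym adj_irr).
split; split.
- by exists edge_vec; exact: edge_vec_orthogonal.
- move=> d d_lt /(orth_coloring_degree_le ord0).
  by rewrite adj_regular leqNgt d_lt.
- by exists edge_color; exact: edge_color_proper.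
- move=> k k_lt /(widen_edge_coloring (k_lt : k <= 4)).
  by apply: (regular_odd_no_coloring adj_sym adj_irr adj_regular); rewrite card_ord.
Qed.
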